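(* Let $m,n$ be positive even integers, and let $P,Q\in\mathbb{C}[z_1,\dots,z_d]$ be nonzero polynomials of the form \[ P(z)=\sum_{\alpha\in(2\mathbb{N})^d,\ |\alpha|\le m}c_\alpha z^\alpha,\qquad Q(z)=\sum_{\alpha\in(2\mathbb{N})^d,\ |\alpha|\le n}d_\alpha z^\alpha, \] where $2\mathbb{N}=\{0,2,4,\dots\}$ (so every variable appears only to even powers). Then \[ \Bigl(\tfrac{m+n}{2}\Bigr)!\;\|P\,Q\|_a\ge\|P\|_a\,\|Q\|_a . \]
   Context: For multi-indices $\alpha\in\mathbb{N}^d$ write $z^\alpha=z_1^{\alpha_1}\cdots z_d^{\alpha_d}$, $\alpha!=\alpha_1!\cdots\alpha_d!$, $|\alpha|=\sum\alpha_i$. The apolar inner product on $\mathbb{C}[z_1,\dots,z_d]$ is $\langle \sum c_\alpha z^\alpha,\sum d_\alpha z^\alpha\rangle_a=\sum_\alpha\alpha!\,c_\alpha\overline{d_\alpha}$, with norm $\|P\|_a=\sqrt{\langle P,P\rangle_a}$. *)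

From HB Require Import structures.
From mathcomp Require Import all_boot all_order all_algebra.
From mathcomp Require Import mpoly.
From mathcomp.real_closed Require Import complex.
Set Implicit Arguments. Unset Strict Implicit. Unset Printing Implicit Defensive.
Import Order.TTheory GRing.Theory Num.Theory.
Local Open Scope ring_scope.

Definition mfact (d : nat) (a : 'X_{1..d}) : nat := (\prod_(i < d) (a i)`!)%N.

Definition apolar_sqnorm (C : numClosedFieldType) (d : nat) (P : {mpoly C[d]}) : C :=
  \sum_(a <- msupp P) (mfact a)%:R * `|P@_a| ^+ 2.

Definition apolar_norm (C : numClosedFieldType) (d : nat) (P : {mpoly C[d]}) : C :=
  sqrtC (apolar_sqnorm P).

Definition even_poly_deg_le (C : numClosedFieldType) (d : nat) (k : nat)
  (P : {mpoly C[d]}) : Prop :=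
  forall a : 'X_{1..d}, a \in msupp P -> (forall i : 'I_d, ~~ odd (a i)) /\ (mdeg a <= k)%N.

From HB Require Import structures.
From mathcomp Require Import all_boot all_order all_algebra.
From mathcomp Require Import mpoly.
From mathcomp.real_closed Require Import complex.
From mathcomp Require Import zify ring.
Set Implicit Arguments. Unset Strict Implicit. Unset Printing Implicit Defensive.
Import Order.TTheory GRing.Theory Num.Theory.
Local Open Scope ring_scope.

(* Homogenizing with two new variables [s], [t], i.e. sending [z^a] to
   [(st)^((K - |a|)/2) z^a], turns [P] and [Q] into homogeneous [F] and [G] of
   degrees [m] and [n].  This can only increase the apolar norm, it commutes
   with products because all degrees are even, and the norm of the
   homogenization of [PQ] exceeds that of [PQ] by at most [((m + n)/2)!].
   It remains to show Bombieri's inequality [||F|| ||G|| <= ||FG||] for a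
   homogeneous [F].  It follows from Reznick's identity
     [||FG||^2 = sum_(u, v) |<d^u F, d^v G>|^2 / (u! v!)],
   in which the terms with [|u| = deg F] alone add up to [||F||^2 ||G||^2].
   Comparing coefficients, the identity reduces in each coordinate to
   Vandermonde's convolution; all sums range over a large enough box of
   exponents. *)

Lemma mnm_lepPn n (x y : 'X_{1..n}) : ~~ (x <= y)%MM -> exists i, ~~ (x i <= y i)%N.
Proof.
move=> h; apply/existsP; apply: contraR h => /existsPn hn.
by apply/mnm_lepP=> i; move: (hn i); rewrite negbK.
Qed.

Lemma addKm n (c x : 'X_{1..n}) : (c + x - c = x)%MM.
Proof. by rewrite addmC addmK. Qed.

Lemma mnm_le_mdeg n (x : 'X_{1..n}) i : (x i <= mdeg x)%N.
Proof. by rewrite mdegE (bigD1 i) //= leq_addr. Qed.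

Lemma lem_mdeg_eq n (x y : 'X_{1..n}) : (x <= y)%MM -> mdeg x = mdeg y -> x = y.
Proof.
move=> le e; have := mdegD (y - x) x; rewrite submK // -e.
move/eqP; rewrite -{1}(add0n (mdeg x)) eqn_add2r eq_sym mdeg_eq0 => /eqP h.
by rewrite -(submK le) h add0m.
Qed.

Lemma mdeg_even n (a : 'X_{1..n}) : (forall i, ~~ odd (a i)) -> ~~ odd (mdeg a).
Proof.
move=> h; rewrite mdegE; elim/big_ind: _ => //.
by move=> x y hx hy; rewrite oddD (negbTE hx) (negbTE hy).
Qed.

Lemma mfact_gt0 n (a : 'X_{1..n}) : (0 < mfact a)%N.
Proof. by rewrite /mfact prodn_gt0 // => i; rewrite fact_gt0. Qed.

Definition mffact n (a u : 'X_{1..n}) : nat := (\prod_(i < n) (a i) ^_ (u i))%N.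

Lemma mffactnn n (a : 'X_{1..n}) : mffact a a = mfact a.
Proof. by apply: eq_bigr => i _; rewrite ffactnn. Qed.

Lemma sqr_norm_sum (C : numClosedFieldType) (I : finType) (P : pred I) (F : I -> C) :
  `|\sum_(i | P i) F i| ^+ 2 = \sum_(i | P i) \sum_(j | P j) F i * (F j)^*.
Proof.
rewrite normCK rmorph_sum big_distrl /=; apply: eq_bigr => i _.
by rewrite big_distrr.
Qed.

Section MultinomialBox.
Variables N B : nat.
Local Notation box := {ffun 'I_N -> 'I_B.+1}.

Definition mnm_of_box (p : box) : 'X_{1..N} := [multinom (p i : nat) | i < N].
Definition box_of_mnm (x : 'X_{1..N}) : box := [ffun i => inord (x i)].
Definition in_box (x : 'X_{1..N}) := [forall i, (x i <= B)%N].
Local Notation mon := mnm_of_box.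

Lemma mnm_of_boxE p i : mon p i = p i.
Proof. exact: mnmE. Qed.

Lemma in_box_mnm p : in_box (mon p).
Proof. by apply/forallP=> i; rewrite mnm_of_boxE -ltnS. Qed.

Lemma mnm_of_boxK : cancel mnm_of_box box_of_mnm.
Proof. by move=> p; apply/ffunP=> i; rewrite ffunE mnm_of_boxE inord_val. Qed.

Lemma box_of_mnmK x : in_box x -> mon (box_of_mnm x) = x.
Proof.
by move=> /forallP h; apply/mnmP=> i; rewrite mnm_of_boxE ffunE inordK // ltnS h.
Qed.

Lemma mnm_of_box_inj : injective mnm_of_box.
Proof. exact: can_inj mnm_of_boxK. Qed.

Lemma in_box_lem x y : (x <= y)%MM -> in_box y -> in_box x.
Proof.
move=> /mnm_lepP h /forallP h2; apply/forallP=> i.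
exact: leq_trans (h i) (h2 i).
Qed.

Lemma big_seq_box (V : nmodType) (s : seq 'X_{1..N}) (H : 'X_{1..N} -> V) :
  uniq s -> (forall x, x \in s -> in_box x) -> (forall x, x \notin s -> H x = 0) ->
  \sum_(x <- s) H x = \sum_(p : box) H (mon p).
Proof.
move=> us sb hz.
rewrite (eq_big_seq (fun x => H (mon (box_of_mnm x)))); last first.
  by move=> x xs; rewrite box_of_mnmK // sb.
rewrite -(big_map box_of_mnm xpredT (fun p => H (mon p))) big_uniq /=; last first.
  rewrite map_inj_in_uniq // => x y xs ys e.
  by rewrite -(box_of_mnmK (sb _ xs)) e box_of_mnmK // sb.
rewrite [RHS](bigID (fun p => p \in map box_of_mnm s)) /= [X in _ = _ + X]big1 ?addr0 //.
move=> p hp; apply: hz; apply: contra hp => hs.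
by apply/mapP; exists (mon p) => //; rewrite mnm_of_boxK.
Qed.

Lemma sum_box_shift (V : nmodType) (c : 'X_{1..N}) (H : 'X_{1..N} -> V) :
  (forall v : box, ~~ in_box (c + mon v)%MM -> H (c + mon v)%MM = 0) ->
  \sum_(v : box) H (c + mon v)%MM = \sum_(g : box | (c <= mon g)%MM) H (mon g).
Proof.
move=> hv.
rewrite [RHS](reindex_onto (fun v => box_of_mnm (c + mon v)%MM)
                           (fun g => box_of_mnm (mon g - c)%MM)); last first.
  move=> g hg; have hi : in_box (mon g - c)%MM.
    exact: in_box_lem (lem_subr _ _) (in_box_mnm g).
  by rewrite box_of_mnmK // addmC submK // mnm_of_boxK.
rewrite (bigID (fun v : box => in_box (c + mon v)%MM)) /= [X in _ + X]big1; last first.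
  by move=> v /hv.
rewrite addr0; apply: eq_big => v.
  case hb: (in_box _).
    by rewrite box_of_mnmK // lem_addr /= addKm mnm_of_boxK eqxx.
  apply/esym/negbTE/negP=> /andP [h1 /eqP h2].
  move: hb; rewrite -h2 box_of_mnmK; last first.
    exact: in_box_lem (lem_subr _ _) (in_box_mnm _).
  by rewrite addmC submK // in_box_mnm.
by move=> hb; rewrite box_of_mnmK.
Qed.

Lemma sum_box_lem_prod (R : comPzSemiRingType) (c : 'X_{1..N}) (h : 'I_N -> nat -> R) :
  \sum_(u : box | (mon u <= c)%MM) \prod_i h i (u i)
  = \prod_i \sum_(t : 'I_B.+1 | (t <= c i)%N) h i t.
Proof.
rewrite (eq_bigr (fun i => \sum_(t : 'I_B.+1) (if (t <= c i)%N then h i t else 0)));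
  last by move=> i _; rewrite big_mkcond.
rewrite bigA_distr_bigA /= big_mkcond; apply: eq_bigr => u _.
case: (boolP (mon u <= c)%MM) => [/mnm_lepP hu | /mnm_lepPn [i hi]].
  by apply: eq_bigr => i _; rewrite -mnm_of_boxE hu.
by rewrite (bigD1 i) //= -mnm_of_boxE (negbTE hi) mul0r.
Qed.

End MultinomialBox.

Definition vandermonde_term (a a' g t : nat) : nat :=
  'C(a, t) * 'C(g - a, a' - t) * (a'`! * (g - a')`!).

Lemma sum_vandermonde_term (a a' g : nat) : (a <= g)%N -> (a' <= g)%N ->
  (\sum_(t < a'.+1) vandermonde_term a a' g t = g`!)%N.
Proof.
move=> ag a'g; rewrite -big_distrl /= binomial.Vandermonde subnKC //.
by rewrite bin_fact.
Qed.

Lemma vandermonde_term_eq0 (a a' g t : nat) : (a <= g)%N -> (t <= a')%N ->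
  ~~ ((t <= a) && (a + a' - t <= g))%N -> vandermonde_term a a' g t = 0%N.
Proof.
move=> ag ta' /nandP [h|h]; first by rewrite /vandermonde_term bin_small ?mul0n // ltnNge.
by rewrite /vandermonde_term (@bin_small (g - a)) ?muln0 //; lia.
Qed.

Lemma ffact_fact_vandermonde (a a' g t : nat) :
  (t <= a)%N -> (t <= a')%N -> (a + a' - t <= g)%N ->
  (a ^_ t * (g - a')`! * (a' ^_ t * (g - a)`!)
   = t`! * (g - (a + a' - t))`! * vandermonde_term a a' g t)%N.
Proof.
move=> ta ta' hg; rewrite /vandermonde_term -(bin_ffact a t).
have -> : (g - (a + a' - t) = (g - a) - (a' - t))%N by lia.
have e2 : (a' - t <= g - a)%N by lia.
rewrite -(ffact_fact ta') -(bin_fact e2) -(bin_ffact a' t); ring.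
Qed.

Section ReznickIdentity.
Variables (C : numClosedFieldType) (N B : nat) (F G : {mpoly C[N]}).
Local Notation box := {ffun 'I_N -> 'I_B.+1}.
Local Notation mon := (@mnm_of_box N B).

Definition invfact (u v : 'X_{1..N}) : C := ((mfact u * mfact v)%:R)^-1.

(* [dpairing u v] is the apolar product of the derivatives d^u F and d^v G,
   written out in coefficients. *)
Definition dpairing_term (u v a : 'X_{1..N}) : C :=
  F@_a * (G@_(v + a - u))^* * (mffact a u * mfact (v + a - u))%:R.
Definition dpairing (u v : 'X_{1..N}) : C :=
  \sum_(a : box | (u <= mon a)%MM) dpairing_term u v (mon a).

Definition cross_term (g a a' : 'X_{1..N}) : C :=
  F@_a * G@_(g - a) * (F@_a' * G@_(g - a'))^*.
Definition conv_weight (u g a a' : 'X_{1..N}) : C :=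
  invfact u (g - (a + a' - u)) * (mffact a u * mfact (g - a'))%:R
                               * (mffact a' u * mfact (g - a))%:R.
Definition reznick_summand (u a a' g : 'X_{1..N}) : C :=
  if [&& (u <= a)%MM, (u <= a')%MM & (a + a' - u <= g)%MM]
  then conv_weight u g a a' * cross_term g a a' else 0.

(* The factor 2 keeps the sum of two support exponents inside the box. *)
Hypothesis F_box : forall x i, x \in msupp F -> (2 * x i <= B)%N.
Hypothesis G_box : forall x i, x \in msupp G -> (2 * x i <= B)%N.

Lemma sum_dpairing_term (u a a' : box) : (mon u <= mon a)%MM -> (mon u <= mon a')%MM ->
  \sum_(v : box) invfact (mon u) (mon v)
      * (dpairing_term (mon u) (mon v) (mon a) * (dpairing_term (mon u) (mon v) (mon a'))^*)
  = \sum_(g : box | (mon a + mon a' - mon u <= mon g)%MM)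
      conv_weight (mon u) (mon g) (mon a) (mon a') * cross_term (mon g) (mon a) (mon a').
Proof.
move=> ua ua'; set c := (mon a + mon a' - mon u)%MM.
set T := fun v => invfact (mon u) v
  * (dpairing_term (mon u) v (mon a) * (dpairing_term (mon u) v (mon a'))^*).
rewrite (eq_bigr (fun v : box => T ((c + mon v) - c)%MM)); last by move=> v _; rewrite addKm.
rewrite (@sum_box_shift N B _ c (fun y => T (y - c)%MM)); last first.
  move=> v hv; rewrite addKm /T /dpairing_term.
  have [->|Fa] := eqVneq F@_(mon a) 0; first by rewrite !mul0r mulr0.
  have [->|Ga] := eqVneq G@_(mon v + mon a' - mon u)%MM 0.
    by rewrite !rmorphM /= conjCK mulr0 !mul0r !mulr0.
  move: hv; apply: contraNeq => _; apply/forallP => i.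
  rewrite -mcoeff_msupp in Fa; rewrite -mcoeff_msupp in Ga; move/mnm_lepP: ua' => /(_ i).
  move: (F_box i Fa) (G_box i Ga); rewrite /c !(mnmDE, mnmBE); lia.
apply: eq_bigr => g /mnm_lepP hc.
move/mnm_lepP: ua => ua; move/mnm_lepP: ua' => ua'.
have e1 : (mon g - c + mon a - mon u = mon g - mon a')%MM.
  by apply/mnmP=> i; move: (ua i) (ua' i) (hc i); rewrite /c !(mnmBE, mnmDE); lia.
have e2 : (mon g - c + mon a' - mon u = mon g - mon a)%MM.
  by apply/mnmP=> i; move: (ua i) (ua' i) (hc i); rewrite /c !(mnmBE, mnmDE); lia.
rewrite /T /dpairing_term e1 e2 /conv_weight /cross_term -/c !rmorphM /= conjCK !conjC_nat.
ring.
Qed.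

Lemma conv_weightE (u g a a' : 'X_{1..N}) :
  (u <= a)%MM -> (u <= a')%MM -> (a + a' - u <= g)%MM ->
  conv_weight u g a a' = (\prod_i vandermonde_term (a i) (a' i) (g i) (u i))%:R.
Proof.
move=> /mnm_lepP h1 /mnm_lepP h2 /mnm_lepP h3.
rewrite /conv_weight /invfact -mulrA -natrM.
have -> : (mffact a u * mfact (g - a') * (mffact a' u * mfact (g - a)) =
           mfact u * mfact (g - (a + a' - u))
           * \prod_i vandermonde_term (a i) (a' i) (g i) (u i))%N.
  rewrite /mffact /mfact -!big_split /=; apply: eq_bigr => i _.
  move: (h1 i) (h2 i) (h3 i); rewrite !(mnmBE, mnmDE) => x1 x2 x3.
  by rewrite -(ffact_fact_vandermonde x1 x2 x3); ring.
by rewrite [X in _ * X]natrM mulKf // pnatr_eq0 -lt0n muln_gt0 !mfact_gt0.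
Qed.

(* Summing the weights over [u] is, coordinatewise, Vandermonde's convolution. *)
Lemma sum_conv_weight (g a a' : box) :
  \sum_(u : box) (if [&& (mon u <= mon a)%MM, (mon u <= mon a')%MM
                       & (mon a + mon a' - mon u <= mon g)%MM]
                  then conv_weight (mon u) (mon g) (mon a) (mon a') else 0)
  = if (mon a <= mon g)%MM && (mon a' <= mon g)%MM then (mfact (mon g))%:R else 0.
Proof.
case: ifP => hag; last first.
  apply: big1 => u _; case: ifP => // /and3P [/mnm_lepP ua /mnm_lepP ua' /mnm_lepP hc].
  move: hag => /negbT /negP; case; apply/andP; split; apply/mnm_lepP => i;
    by move: (ua i) (ua' i) (hc i); rewrite !(mnmBE, mnmDE); lia.
move/andP: hag => [/mnm_lepP ag /mnm_lepP a'g].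
pose v i t := vandermonde_term (mon a i) (mon a' i) (mon g i) t.
transitivity (\sum_(u : box | (mon u <= mon a')%MM) \prod_i ((v i (u i))%:R : C)).
  rewrite [RHS]big_mkcond; apply: eq_bigr => u _.
  case: (boolP (mon u <= mon a')%MM) => ua' /=; last by rewrite andbF.
  case: (boolP ((mon u <= mon a)%MM && (mon a + mon a' - mon u <= mon g)%MM)) => hc.
    case/andP: hc => ua hc; rewrite conv_weightE // natr_prod.
    by apply: eq_bigr => i _; rewrite /v -mnm_of_boxE.
  have [i hi] : exists i, ~~ ((u i <= mon a i) && (mon a i + mon a' i - u i <= mon g i))%N.
    case/nandP: hc => /mnm_lepPn [i hi]; exists i; rewrite -mnm_of_boxE.
      by rewrite (negbTE hi).
    by move: hi; rewrite !(mnmBE, mnmDE) => /negbTE ->; rewrite andbF.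
  move/mnm_lepP: ua' => /(_ i); rewrite mnm_of_boxE => ua'.
  by rewrite (bigD1 i) //= /v vandermonde_term_eq0 // mul0r.
rewrite (@sum_box_lem_prod N B C (mon a') (fun i t => (v i t)%:R)) /mfact natr_prod.
apply: eq_bigr => i _.
have hb : (mon a' i < B.+1)%N by rewrite mnm_of_boxE.
rewrite (eq_bigl (fun t : 'I_B.+1 => (t < (mon a' i).+1)%N)); last by move=> t; rewrite ltnS.
by rewrite -(big_ord_widen B.+1 (fun t => (v i t)%:R) hb) -natr_sum sum_vandermonde_term.
Qed.

Lemma sqnorm_coefM_expand :
  \sum_(g : box) (mfact (mon g))%:R *
      `|\sum_(a : box | (mon a <= mon g)%MM) F@_(mon a) * G@_(mon g - mon a)| ^+ 2
  = \sum_(g : box) \sum_(a : box) \sum_(a' : box) \sum_(u : box)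
      reznick_summand (mon u) (mon a) (mon a') (mon g).
Proof.
apply: eq_bigr => g _.
rewrite sqr_norm_sum big_distrr /= [LHS]big_mkcond; apply: eq_bigr => a _.
have -> : \sum_(a' : box) \sum_(u : box) reznick_summand (mon u) (mon a) (mon a') (mon g) =
    \sum_(a' : box) cross_term (mon g) (mon a) (mon a') *
      (if (mon a <= mon g)%MM && (mon a' <= mon g)%MM then (mfact (mon g))%:R else 0).
  apply: eq_bigr => a' _; rewrite -sum_conv_weight big_distrr /=; apply: eq_bigr => u _.
  by rewrite /reznick_summand; case: ifP => _; rewrite ?mulr0 // mulrC.
case: ifP => ag /=; last by rewrite big1 // => a' _; rewrite mulr0.
rewrite big_distrr /= [LHS]big_mkcond; apply: eq_bigr => a' _.
by case: ifP => _; rewrite ?mulr0 // mulrC /cross_term.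
Qed.

Lemma sqnorm_dpairing_expand (u : box) :
  \sum_(v : box) invfact (mon u) (mon v) * `|dpairing (mon u) (mon v)| ^+ 2
  = \sum_(a : box) \sum_(a' : box) \sum_(g : box)
      reznick_summand (mon u) (mon a) (mon a') (mon g).
Proof.
transitivity (\sum_(v : box) \sum_(a : box | (mon u <= mon a)%MM)
    \sum_(a' : box | (mon u <= mon a')%MM) invfact (mon u) (mon v)
      * (dpairing_term (mon u) (mon v) (mon a) * (dpairing_term (mon u) (mon v) (mon a'))^*)).
  apply: eq_bigr => v _; rewrite /dpairing sqr_norm_sum big_distrr; apply: eq_bigr => a _.
  by rewrite big_distrr.
rewrite exchange_big [LHS]big_mkcond; apply: eq_bigr => a _.
case: ifP => ua; last first.
  by rewrite big1 // => a' _; rewrite big1 // => g _; rewrite /reznick_summand ua.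
rewrite exchange_big [LHS]big_mkcond; apply: eq_bigr => a' _.
case: ifP => ua'; last first.
  by rewrite big1 // => g _; rewrite /reznick_summand ua ua' andbF.
rewrite sum_dpairing_term // [LHS]big_mkcond; apply: eq_bigr => g _.
by rewrite /reznick_summand ua ua'.
Qed.

Lemma reznick_identity :
  \sum_(g : box) (mfact (mon g))%:R *
      `|\sum_(a : box | (mon a <= mon g)%MM) F@_(mon a) * G@_(mon g - mon a)| ^+ 2
  = \sum_(u : box) \sum_(v : box) invfact (mon u) (mon v) * `|dpairing (mon u) (mon v)| ^+ 2.
Proof.
rewrite sqnorm_coefM_expand.
under [RHS]eq_bigr => u _ do rewrite sqnorm_dpairing_expand.
transitivity (\sum_(g : box) \sum_(u : box) \sum_(a : box) \sum_(a' : box)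
                reznick_summand (mon u) (mon a) (mon a') (mon g)).
  apply: eq_bigr => g _; under eq_bigr => a _ do rewrite exchange_big.
  by rewrite exchange_big.
rewrite exchange_big; apply: eq_bigr => u _.
rewrite exchange_big; apply: eq_bigr => a _.
exact: exchange_big.
Qed.

Section HomogeneousFactor.
Variable m : nat.
Hypothesis F_homog : F \is m.-homog.

Lemma dpairing_top (u v : box) : mon u \in msupp F ->
  dpairing (mon u) (mon v) = F@_(mon u) * (G@_(mon v))^* * (mfact (mon u) * mfact (mon v))%:R.
Proof.
move=> Fu; rewrite /dpairing (bigD1 u) ?lepm_refl //= big1 ?addr0; last first.
  move=> a /andP [ua au]; rewrite /dpairing_term.
  have [->|Fa] := eqVneq F@_(mon a) 0; first by rewrite !mul0r.
  rewrite -mcoeff_msupp in Fa.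
  have /mnm_of_box_inj e : mon u = mon a.
    by apply: lem_mdeg_eq ua _; rewrite !(dhomog_mf F_homog).
  by move: au; rewrite e eqxx.
by rewrite /dpairing_term addmK mffactnn.
Qed.

(* Only the terms with [u] in the support of [F] are kept: there [d^u F] is
   the constant [u! F_u]. *)
Lemma sqnorm_le_sum_dpairing :
  (\sum_(u : box) (mfact (mon u))%:R * `|F@_(mon u)| ^+ 2) *
  (\sum_(v : box) (mfact (mon v))%:R * `|G@_(mon v)| ^+ 2)
  <= \sum_(u : box) \sum_(v : box) invfact (mon u) (mon v) * `|dpairing (mon u) (mon v)| ^+ 2.
Proof.
rewrite big_distrl /=; apply: ler_sum => u _.
rewrite big_distrr /=; apply: ler_sum => v _.
have [->|Fu] := eqVneq F@_(mon u) 0.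
  by rewrite normr0 expr0n /= mulr0 mul0r mulr_ge0 ?invr_ge0 ?ler0n ?exprn_ge0.
rewrite dpairing_top ?mcoeff_msupp // /invfact !normrM norm_conjC normr_nat !exprMn.
have u0 : ((mfact (mon u))%:R : C) != 0 by rewrite pnatr_eq0 -lt0n mfact_gt0.
have v0 : ((mfact (mon v))%:R : C) != 0 by rewrite pnatr_eq0 -lt0n mfact_gt0.
by rewrite natrM le_eqVlt; apply/orP; left; apply/eqP; field; rewrite u0 v0.
Qed.

End HomogeneousFactor.
End ReznickIdentity.

Lemma apolar_sqnorm_ge0 (C : numClosedFieldType) n (S : {mpoly C[n]}) : 0 <= apolar_sqnorm S.
Proof. by apply: sumr_ge0 => x _; rewrite mulr_ge0 ?ler0n ?exprn_ge0. Qed.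

Section BoxExpansion.
Variables (C : numClosedFieldType) (N B : nat).
Local Notation box := {ffun 'I_N -> 'I_B.+1}.
Local Notation mon := (@mnm_of_box N B).
Local Notation in_box := (@in_box N B).

Lemma apolar_sqnorm_box (F : {mpoly C[N]}) : {in msupp F, forall x, in_box x} ->
  apolar_sqnorm F = \sum_(p : box) (mfact (mon p))%:R * `|F@_(mon p)| ^+ 2.
Proof.
move=> hb; rewrite /apolar_sqnorm.
rewrite (big_seq_box (B := B) (H := fun x => (mfact x)%:R * `|F@_x| ^+ 2)) //.
by move=> x /memN_msupp_eq0 ->; rewrite normr0 expr0n mulr0.
Qed.

Lemma mcoeffM_box (F G : {mpoly C[N]}) (x : 'X_{1..N}) :
  {in msupp F, forall y, in_box y} -> {in msupp G, forall y, in_box y} -> in_box x ->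
  (F * G)@_x = \sum_(a : box | (mon a <= x)%MM) F@_(mon a) * G@_(x - mon a).
Proof.
move=> hF hG hx.
rewrite mpolyME raddf_sum /= big_allpairs.
rewrite (big_seq_box (B := B)
          (H := fun a => \sum_(b <- msupp G) ((F@_a * G@_b) *: 'X_[a + b])@_x)) //;
  last by move=> y /memN_msupp_eq0 hy; apply: big1 => b _; rewrite hy mul0r scale0r mcoeff0.
rewrite [RHS]big_mkcond; apply: eq_bigr => a _.
rewrite (big_seq_box (B := B) (H := fun b => ((F@_(mon a) * G@_b) *: 'X_[mon a + b])@_x)) //;
  last by move=> y /memN_msupp_eq0 hy; rewrite hy mulr0 scale0r mcoeff0.
case: ifP => ax.
  have hi : in_box (x - mon a)%MM by exact: in_box_lem (lem_subr _ _) hx.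
  rewrite (bigD1 (box_of_mnm B (x - mon a)%MM)) //= big1 ?addr0.
    by rewrite mcoeffZ mcoeffX box_of_mnmK // addmC submK // eqxx mulr1.
  move=> b hb; rewrite mcoeffZ mcoeffX; case: eqP; rewrite ?mulr0 // => e.
  by move: hb; rewrite -e addKm mnm_of_boxK eqxx.
apply: big1 => b _; rewrite mcoeffZ mcoeffX; case: eqP; rewrite ?mulr0 // => e.
by move: ax; rewrite -e lem_addr.
Qed.

End BoxExpansion.

Lemma apolar_sqnormM_ge (C : numClosedFieldType) N m (F G : {mpoly C[N]}) :
  F \is m.-homog -> apolar_sqnorm F * apolar_sqnorm G <= apolar_sqnorm (F * G).
Proof.
move=> F_homog; set B := (2 * (msize F + msize G).+1)%N.
have supp_bound (S : {mpoly C[N]}) x i : x \in msupp S ->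
    (msize S <= (msize F + msize G).+1)%N -> (2 * x i <= B)%N.
  by move=> /msize_mdeg_lt h hS; have := mnm_le_mdeg x i; rewrite /B; lia.
have F_box x i : x \in msupp F -> (2 * x i <= B)%N.
  by move=> xF; apply: supp_bound xF _; lia.
have G_box x i : x \in msupp G -> (2 * x i <= B)%N.
  by move=> xG; apply: supp_bound xG _; lia.
have in_box_of (S : {mpoly C[N]}) :
    (forall x i, x \in msupp S -> (2 * x i <= B)%N) -> {in msupp S, forall x, in_box B x}.
  by move=> hS x xS; apply/forallP => i; have := hS x i xS; lia.
have FG_box : {in msupp (F * G), forall x, in_box B x}.
  by apply: in_box_of => x i x_supp; apply: supp_bound x_supp (msizeM_le F G).
rewrite (apolar_sqnorm_box (in_box_of _ F_box)) (apolar_sqnorm_box (in_box_of _ G_box)).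
rewrite (apolar_sqnorm_box FG_box).
under [X in _ <= X]eq_bigr => p _ do
  rewrite (mcoeffM_box (in_box_of _ F_box) (in_box_of _ G_box) (in_box_mnm p)).
rewrite (reznick_identity F_box G_box).
exact: sqnorm_le_sum_dpairing F_homog.
Qed.

Lemma apolar_sqnorm_seq (C : numClosedFieldType) n (S : {mpoly C[n]}) (r : seq 'X_{1..n}) :
  uniq r -> {subset msupp S <= r} ->
  apolar_sqnorm S = \sum_(x <- r) (mfact x)%:R * `|S@_x| ^+ 2.
Proof.
move=> ur sub; set B := (\max_(y <- r) mdeg y)%N.
have r_box x : x \in r -> in_box B x.
  move=> xr; apply/forallP=> i; apply: leq_trans (mnm_le_mdeg x i) _.
  exact: (leq_bigmax_seq (F := mdeg)).
have vanish x : x \notin msupp S -> (mfact x)%:R * `|S@_x| ^+ 2 = 0.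
  by move/memN_msupp_eq0 ->; rewrite normr0 expr0n mulr0.
rewrite /apolar_sqnorm !(big_seq_box (B := B) (H := fun x => (mfact x)%:R * `|S@_x| ^+ 2)) //.
- by move=> x xr; apply: vanish; apply: contra xr; apply: sub.
- by move=> x /sub; apply: r_box.
Qed.

Lemma apolar_sqnorm_bmnm (C : numClosedFieldType) n (S : {mpoly C[n]}) k : (msize S <= k)%N ->
  apolar_sqnorm S = \sum_(c : 'X_{1..n < k}) (mfact c)%:R * `|S@_c| ^+ 2.
Proof.
move=> hk; rewrite (apolar_sqnorm_seq (r := [seq val c | c <- index_enum 'X_{1..n < k}])).
- by rewrite big_map.
- by rewrite map_inj_uniq ?index_enum_uniq //; apply: val_inj.
move=> x /msize_mdeg_lt h; apply/mapP.
have hx : (mdeg x < k)%N by apply: leq_trans h hk.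
by exists (BMultinom hx) => //; rewrite mem_index_enum.
Qed.

Section Homogenization.
Variables (C : numClosedFieldType) (d : nat).

(* The exponent [a] of [z^a] is extended by [(K - |a|)/2] in each of the two
   new leading variables; the division is exact when [K] and [|a|] are even. *)
Definition homog_mnm (K : nat) (a : 'X_{1..d}) : 'X_{1..d.+2} :=
  [multinom [tuple of ((K - mdeg a)./2)%N :: ((K - mdeg a)./2)%N :: multinom_val a]].

Lemma homog_mnm0 K a : homog_mnm K a ord0 = ((K - mdeg a)./2)%N.
Proof. by rewrite /homog_mnm /fun_of_multinom /= tnth0. Qed.

Lemma homog_mnm1 K a : homog_mnm K a (lift ord0 ord0) = ((K - mdeg a)./2)%N.
Proof. by rewrite /homog_mnm /fun_of_multinom /= tnthS tnth0. Qed.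

Lemma homog_mnmS K a i : homog_mnm K a (lift ord0 (lift ord0 i)) = a i.
Proof. by rewrite /homog_mnm /fun_of_multinom /= !tnthS. Qed.

Lemma homog_mnm_inj K : injective (homog_mnm K).
Proof. by move=> a b e; apply/mnmP=> i; rewrite -!(homog_mnmS K) e. Qed.

Lemma mfact_homog_mnm K a :
  mfact (homog_mnm K a) = (((K - mdeg a)./2)`! * ((K - mdeg a)./2)`! * mfact a)%N.
Proof.
rewrite /mfact !big_ord_recl homog_mnm0 homog_mnm1 mulnA; congr (_ * _)%N.
by apply: eq_bigr => i _; rewrite homog_mnmS.
Qed.

Lemma mdeg_homog_mnm K a :
  mdeg (homog_mnm K a) = (((K - mdeg a)./2) + ((K - mdeg a)./2) + mdeg a)%N.
Proof.
rewrite [LHS]mdegE !big_ord_recl homog_mnm0 homog_mnm1 addnA mdegE; congr (_ + _)%N.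
by apply: eq_bigr => i _; rewrite homog_mnmS.
Qed.

Lemma homog_mnmD K1 K2 a b : ~~ odd K1 -> ~~ odd K2 -> ~~ odd (mdeg a) -> ~~ odd (mdeg b) ->
  (mdeg a <= K1)%N -> (mdeg b <= K2)%N ->
  (homog_mnm K1 a + homog_mnm K2 b = homog_mnm (K1 + K2) (a + b))%MM.
Proof.
move=> o1 o2 oa ob la lb; apply/mnmP=> i; rewrite mnmDE.
case: (unliftP ord0 i) => [j ->|->]; last by rewrite !homog_mnm0 mdegD; lia.
case: (unliftP ord0 j) => [k ->|->]; last by rewrite !homog_mnm1 mdegD; lia.
by rewrite !homog_mnmS mnmDE.
Qed.

Definition homogenize (K k : nat) (S : {mpoly C[d]}) : {mpoly C[d.+2]} :=
  \sum_(c : 'X_{1..d < k}) S@_c *: 'X_[homog_mnm K c].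

Lemma mcoeff_homogenize K k S (c : 'X_{1..d < k}) : (homogenize K k S)@_(homog_mnm K c) = S@_c.
Proof.
rewrite /homogenize raddf_sum (bigD1 c) //= big1 ?addr0.
  by rewrite mcoeffZ mcoeffX eqxx mulr1.
move=> c' hc; rewrite mcoeffZ mcoeffX.
case: eqP => [/homog_mnm_inj e|]; last by rewrite mulr0.
by move: hc; rewrite (val_inj e) eqxx.
Qed.

Lemma msupp_homogenize K k S x :
  x \in msupp (homogenize K k S) -> exists c : 'X_{1..d < k}, x = homog_mnm K c.
Proof.
rewrite mcoeff_msupp => h.
have [c /eqP e | hn] := pickP (fun c : 'X_{1..d < k} => x == homog_mnm K (val c)).
  by exists c.
move: h; rewrite /homogenize raddf_sum big1 ?eqxx // => c _ /=; rewrite mcoeffZ mcoeffX.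
case: eqP => [e|]; last by rewrite mulr0.
by move: (hn c); rewrite e eqxx.
Qed.

Lemma homogenize_sum K k (I : Type) (r : seq I) (F : I -> {mpoly C[d]}) :
  homogenize K k (\sum_(i <- r) F i) = \sum_(i <- r) homogenize K k (F i).
Proof.
rewrite /homogenize exchange_big /=; apply: eq_bigr => c _.
by rewrite raddf_sum scaler_suml.
Qed.

Lemma homogenizeZ K k a S : homogenize K k (a *: S) = a *: homogenize K k S.
Proof. by rewrite /homogenize scaler_sumr; apply: eq_bigr => c _; rewrite mcoeffZ scalerA. Qed.

Lemma homogenizeX K k (c : 'X_{1..d}) :
  (mdeg c < k)%N -> homogenize K k 'X_[c] = 'X_[homog_mnm K c].
Proof.
move=> hc; rewrite /homogenize (bigD1 (BMultinom hc)) //= big1 ?addr0.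
  by rewrite mcoeffX eqxx scale1r.
move=> c' hc'; rewrite mcoeffX; case: eqP; last by rewrite scale0r.
by move=> e; move: hc'; rewrite -val_eqE /= e eqxx.
Qed.

Lemma apolar_sqnorm_homogenize K k S :
  apolar_sqnorm (homogenize K k S)
  = \sum_(c : 'X_{1..d < k}) (mfact (homog_mnm K c))%:R * `|S@_c| ^+ 2.
Proof.
rewrite (apolar_sqnorm_seq (r := [seq homog_mnm K (val c) | c <- index_enum 'X_{1..d < k}])).
- by rewrite big_map; apply: eq_bigr => c _; rewrite mcoeff_homogenize.
- by rewrite map_inj_uniq ?index_enum_uniq // => a b /homog_mnm_inj /val_inj.
by move=> x /msupp_homogenize [c ->]; apply/mapP; exists c; rewrite ?mem_index_enum.
Qed.


Lemma homogenize_homog K k (S : {mpoly C[d]}) : ~~ odd K -> even_poly_deg_le K S ->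
  homogenize K k S \is K.-homog.
Proof.
move=> oK hS; apply/dhomogP => x hx; change (mdeg x = K).
have [c e] := msupp_homogenize hx.
move: hx; rewrite e mcoeff_msupp mcoeff_homogenize -mcoeff_msupp => /hS [he hd].
by have := mdeg_even he; rewrite mdeg_homog_mnm; lia.
Qed.

Lemma homogenizeM m n k (P Q : {mpoly C[d]}) : ~~ odd m -> ~~ odd n ->
  even_poly_deg_le m P -> even_poly_deg_le n Q -> (msize P + msize Q <= k)%N ->
  homogenize m k P * homogenize n k Q = homogenize (m + n) k (P * Q).
Proof.
move=> om on hP hQ hk.
have kP : (msize P <= k)%N by lia.
have kQ : (msize Q <= k)%N by lia.
rewrite (mpolywME kP kQ) homogenize_sum /homogenize big_distrl /=.
under eq_bigr => a _ do rewrite big_distrr /=.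
rewrite pair_bigA /=; apply: eq_bigr => [[a b]] _ /=.
rewrite -scalerAl -scalerAr scalerA -mpolyXD -/(homogenize _ _ _) homogenizeZ.
have [->|Pa] := eqVneq P@_a 0; first by rewrite !mul0r !scale0r.
have [->|Qb] := eqVneq Q@_b 0; first by rewrite !mulr0 !scale0r.
rewrite -mcoeff_msupp in Pa; rewrite -mcoeff_msupp in Qb.
have [ha hda] := hP _ Pa; have [hb hdb] := hQ _ Qb.
rewrite homog_mnmD ?mdeg_even // homogenizeX // mdegD.
by have := msize_mdeg_lt Pa; have := msize_mdeg_lt Qb; lia.
Qed.

Lemma apolar_sqnorm_le_homogenize K k S : (msize S <= k)%N ->
  apolar_sqnorm S <= apolar_sqnorm (homogenize K k S).
Proof.
move=> hS; rewrite (apolar_sqnorm_bmnm hS) apolar_sqnorm_homogenize; apply: ler_sum => c _.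
rewrite ler_wpM2r ?exprn_ge0 // ler_nat mfact_homog_mnm leq_pmull //.
by rewrite muln_gt0 fact_gt0.
Qed.

Lemma apolar_sqnorm_homogenize_le K k S : (msize S <= k)%N ->
  apolar_sqnorm (homogenize K k S) <= (K./2)`!%:R ^+ 2 * apolar_sqnorm S.
Proof.
move=> hS; rewrite apolar_sqnorm_homogenize (apolar_sqnorm_bmnm hS) mulr_sumr.
apply: ler_sum => c _; rewrite [X in _ <= X]mulrA -natrX -natrM ler_wpM2r ?exprn_ge0 // ler_nat.
rewrite mfact_homog_mnm leq_mul2r expnS expn1 leq_mul ?orbT // leq_fact //; lia.
Qed.

Lemma apolar_sqnormM_even_ge m n (P Q : {mpoly C[d]}) : ~~ odd m -> ~~ odd n ->
  even_poly_deg_le m P -> even_poly_deg_le n Q ->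
  apolar_sqnorm P * apolar_sqnorm Q <= ((m + n)./2)`!%:R ^+ 2 * apolar_sqnorm (P * Q).
Proof.
move=> om on hP hQ.
apply: le_trans (apolar_sqnorm_homogenize_le (m + n) (msizeM_le P Q)).
rewrite -homogenizeM //.
apply: le_trans (apolar_sqnormM_ge _ (homogenize_homog _ om hP)).
by rewrite ler_pM ?apolar_sqnorm_ge0 ?apolar_sqnorm_le_homogenize //; lia.
Qed.

End Homogenization.

Unset Implicit Arguments.
Local Open Scope complex_scope.

Theorem theorem4p2 (R : rcfType) (d m n : nat)
  (P Q : {mpoly R[i][d]})
  (hm : (0 < m)%N) (hme : ~~ odd m) (hn : (0 < n)%N) (hne : ~~ odd n)
  (hP0 : P != 0) (hQ0 : Q != 0)
  (hP : even_poly_deg_le m P) (hQ : even_poly_deg_le n Q) :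
  apolar_norm P * apolar_norm Q <= ((m + n)./2)`!%:R * apolar_norm (P * Q).
Proof.
rewrite /apolar_norm -sqrtCM ?nnegrE ?apolar_sqnorm_ge0 //.
rewrite -[X in _ <= X * _](@sqrCK _ ((m + n)./2)`!%:R) ?ler0n //.
rewrite -sqrtCM ?nnegrE ?exprn_ge0 ?ler0n ?apolar_sqnorm_ge0 //.
rewrite ler_sqrtC ?nnegrE ?mulr_ge0 ?exprn_ge0 ?ler0n ?apolar_sqnorm_ge0 //.
exact: apolar_sqnormM_even_ge.
Qed.
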